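(* Let $N\ge1$, $h,\varepsilon\in(0,1)$, and let $\Phi$ be the opinion operator defined in the context. Let $0\le L\le N$ and let $P=(p_1,\dots,p_N)$ with $p_k=-1$ for $k\le L$ and $p_k=1$ for $k>L$ (a basic fixed point). Let $V^0\in[-1,1]^N$ have nondecreasing components and satisfy $\rho(V^0,P)\le 1-\varepsilon$, where $\rho(V,V')=\max_{1\le k\le N}|v_k-v_k'|$. Then there exists $n_0$ such that $\Phi^n(V^0)=P$ for all $n\ge n_0$.
   Context: For $V=(v_1,\dots,v_N)\in[-1,1]^N$ and each $k$, let $J(v_k)=\{l\in\{1,\dots,N\}:|v_l-v_k|\le\varepsilon\}$ and $I(v_k)=|J(v_k)|$. Put $w_k(V)=v_k+\frac{h}{I(v_k)}\sum_{l\in J(v_k)}v_l$. Then $\Phi(V)=(v_1',\dots,v_N')$ where $v_k'=-1$ if $w_k<-1$, $v_k'=1$ if $w_k>1$, and $v_k'=w_k$ if $|w_k|\le1$. *)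

(* Opinions are finite functions 'I_N -> R, R a realFieldType.
   Index k : 'I_N stands for the paper's index k+1 (0-based indices). *)
From mathcomp Require Import all_boot all_order all_algebra.
Set Implicit Arguments. Unset Strict Implicit. Unset Printing Implicit Defensive.
Import Order.TTheory GRing.Theory Num.Theory.
Local Open Scope ring_scope.

Section Opinion.
Variables (R : realFieldType) (N : nat) (h eps : R).

Definition Jset (V : {ffun 'I_N -> R}) (k : 'I_N) : {set 'I_N} :=
  [set l | `|V l - V k| <= eps].

Definition Icard (V : {ffun 'I_N -> R}) (k : 'I_N) : nat := #|Jset V k|.

Definition wk (V : {ffun 'I_N -> R}) (k : 'I_N) : R :=
  V k + h / (Icard V k)%:R * \sum_(l in Jset V k) V l.

Definition clip (w : R) : R :=
  if w < -1 then -1 else if 1 < w then 1 else w.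

Definition Phi (V : {ffun 'I_N -> R}) : {ffun 'I_N -> R} :=
  [ffun k => clip (wk V k)].

End Opinion.

Definition rho (R : realFieldType) (N : nat) (V W : {ffun 'I_N -> R}) : R :=
  \big[Num.max/0]_(k < N) `|V k - W k|.

(* basic fixed point: p_k = -1 for k <= L (1-based), i.e. 0-based index < L *)
Definition basicP (R : realFieldType) (N L : nat) : {ffun 'I_N -> R} :=
  [ffun k : 'I_N => if (k < L)%N then -1 else 1].

(* Call V polarized towards a sign vector P (entries -1 or 1) when eps <= P_k v_k <= 1 for
   all k.  Opinions on opposite sides are then more than eps apart, so the confidence set J(v_k)
   only contains opinions on the side of v_k, whose mean has signed value at least eps.  Hence one
   step of Phi raises every signed opinion P_k v_k by at least h eps unless clipping makes it 1;
   polarization is preserved, and after n >= 1/(h eps) steps every P_k v_k equals 1, i.e. V = P.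
   The hypothesis rho(V0, P) <= 1 - eps says exactly that V0 is polarized towards the basic fixed
   point P. *)

From mathcomp Require Import all_boot all_order all_algebra.
From mathcomp Require Import reals.
From mathcomp Require Import lra.
Set Implicit Arguments. Unset Strict Implicit. Unset Printing Implicit Defensive.
Import Order.TTheory GRing.Theory Num.Theory.
Local Open Scope ring_scope.

Section Clip.
Variable R : realFieldType.
Implicit Types a s w : R.

Lemma clip_le1 w : clip w <= 1.
Proof. by rewrite /clip; case: (ltP w (-1)); case: (ltP 1 w); lra. Qed.

Lemma clipN w : clip (- w) = - clip w.
Proof.
rewrite /clip; case: (ltP w (-1)); case: (ltP 1 w);
  case: (ltP (- w) (-1)); case: (ltP 1 (- w)); lra.
Qed.

Lemma clip_signM s w : s = -1 \/ s = 1 -> clip (s * w) = s * clip w.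
Proof. by case=> ->; rewrite ?mulN1r ?mul1r ?clipN. Qed.

Lemma clip_ge_min a w : -1 <= a -> a <= w -> Num.min 1 a <= clip w.
Proof.
rewrite /clip ge_min => ? ?.
case: (ltP w (-1)); case: (ltP 1 w) => *; apply/orP;
  first [by left; lra | by right; lra].
Qed.

End Clip.

Lemma mean_ge (R : realFieldType) (T : finType) (A : {set T}) (F : T -> R) a c :
  0 <= a -> A != set0 -> (forall l, l \in A -> c <= F l) ->
  a * c <= a / #|A|%:R * \sum_(l in A) F l.
Proof.
move=> a_ge0 A_neq0 c_le_F; rewrite -mulrA; apply: ler_wpM2l => //.
rewrite ler_pdivlMl ?ltr0n ?card_gt0 //.
by rewrite mulr_natl -sumr_const; apply: ler_sum.
Qed.

Lemma mem_Jset (R : realFieldType) N (eps : R) (V : {ffun 'I_N -> R}) k :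
  0 <= eps -> k \in Jset eps V k.
Proof. by move=> eps_ge0; rewrite inE subrr normr0. Qed.

Lemma le_rho (R : realFieldType) N (V W : {ffun 'I_N -> R}) k :
  `|V k - W k| <= rho V W.
Proof. exact: le_bigmax. Qed.

Lemma natr_mul_ge1 (R : archiRealFieldType) (x : R) :
  0 < x -> exists n0, forall n, (n0 <= n)%N -> 1 <= n%:R * x.
Proof.
move=> x_gt0; exists (Num.bound x^-1) => n n0_le_n.
rewrite -[leLHS](mulVf (lt0r_neq0 x_gt0)) ler_pM2r //.
have inv_ge0 : 0 <= x^-1 by rewrite invr_ge0 ltW.
by apply: le_trans (ltW (archi_boundP inv_ge0)) _; rewrite ler_nat.
Qed.

Section Polarization.
Variables (R : realFieldType) (N : nat) (h eps : R) (P : {ffun 'I_N -> R}).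
Hypotheses (h_ge0 : 0 <= h) (eps_gt0 : 0 < eps) (eps_le1 : eps <= 1).
Hypothesis P_sign : forall k, P k = -1 \/ P k = 1.
Implicit Types V : {ffun 'I_N -> R}.

Let step_ge0 : 0 <= h * eps := mulr_ge0 h_ge0 (ltW eps_gt0).

Definition polarized V := forall k, eps <= P k * V k <= 1.

Lemma polarized_of_rho V :
  (forall k, -1 <= V k <= 1) -> rho V P <= 1 - eps -> polarized V.
Proof.
move=> V_bound rho_le k; have := le_rho V P k; have /andP[? ?] := V_bound k.
rewrite ler_norml; case: (P_sign k) => -> /andP[? ?].
all: apply/andP; split; lra.
Qed.

Lemma Jset_sign V k l : polarized V -> l \in Jset eps V k -> P l = P k.
Proof.
move=> pol l_near_k.
have /andP[? ?] : - eps <= V l - V k <= eps by move: l_near_k; rewrite inE ler_norml.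
have := pol k; have := pol l; case: (P_sign k) => ->; case: (P_sign l) => -> //;
  move=> /andP[? ?] /andP[? ?]; suff: eps <= 0 by rewrite leNgt eps_gt0.
all: lra.
Qed.

Lemma sign_wk_ge V k : polarized V -> P k * V k + h * eps <= P k * wk h eps V k.
Proof.
move=> pol; rewrite /wk mulrDr lerD2l mulrCA mulr_sumr.
rewrite (eq_bigr (fun l => P l * V l)); last by move=> l /(Jset_sign pol) ->.
apply: mean_ge => //; first by apply/set0Pn; exists k; apply: mem_Jset; apply: ltW.
by move=> l _; have /andP[] := pol l.
Qed.

Lemma sign_Phi_bounds V k : polarized V ->
  Num.min 1 (P k * V k + h * eps) <= P k * Phi h eps V k <= 1.
Proof.
move=> pol; rewrite ffunE -clip_signM // clip_le1 andbT.
apply: clip_ge_min (sign_wk_ge k pol).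
have /andP[Pk_ge _] := pol k.
by rewrite (le_trans (lerN10 _)) // addr_ge0 // (le_trans (ltW eps_gt0)).
Qed.

Lemma polarized_Phi V : polarized V -> polarized (Phi h eps V).
Proof.
move=> pol k; have /andP[min_le ->] := sign_Phi_bounds k pol; rewrite andbT.
apply: le_trans min_le; have /andP[Pk_ge _] := pol k.
by rewrite le_min eps_le1 -[leLHS]addr0 lerD.
Qed.

Lemma polarized_iter V n : polarized V -> polarized (iter n (Phi h eps) V).
Proof. by move=> pol; elim: n => //= n; apply: polarized_Phi. Qed.

Lemma sign_iter_Phi_ge V k n : polarized V ->
  Num.min 1 (P k * V k + n%:R * (h * eps)) <= P k * iter n (Phi h eps) V k.
Proof.
move=> pol; elim: n => [|n IH] /=; first by rewrite mul0r addr0 ge_min lexx orbT.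
have /andP[step _] := sign_Phi_bounds k (polarized_iter n pol); apply: le_trans step.
rewrite -natr1 mulrDl mul1r addrA le_min ge_min lexx /=.
set x := P k * V k + _ in IH *.
have min_shift : Num.min 1 (x + h * eps) <= Num.min 1 x + h * eps.
  by rewrite addr_minl le_min !ge_min lerDl step_ge0 lexx orbT.
by apply: le_trans min_shift _; rewrite lerD2r.
Qed.

Lemma iter_Phi_eq_sign V n :
  polarized V -> 1 <= n%:R * (h * eps) -> iter n (Phi h eps) V = P.
Proof.
move=> pol n_large; apply/ffunP => k.
have /andP[_ le1] := polarized_iter n pol k.
have ge1 : 1 <= P k * iter n (Phi h eps) V k.
  apply: le_trans (sign_iter_Phi_ge k n pol); have /andP[Pk_ge _] := pol k.
  by rewrite le_min lexx -[leLHS]add0r lerD // (le_trans (ltW eps_gt0)).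
by case: (P_sign k) le1 ge1 => ->; lra.
Qed.

End Polarization.

Theorem theorem1 (R : realType) (N : nat) (h eps : R) (L : nat)
    (V0 : {ffun 'I_N -> R}) :
  (1 <= N)%N ->
  0 < h < 1 -> 0 < eps < 1 ->
  (L <= N)%N ->
  (forall k, -1 <= V0 k <= 1) ->
  (forall k l : 'I_N, (k <= l)%N -> V0 k <= V0 l) ->
  rho V0 (basicP R N L) <= 1 - eps ->
  exists n0 : nat, forall n : nat, (n0 <= n)%N ->
    iter n (Phi h eps) V0 = basicP R N L.
Proof.
move=> _ /andP[h_gt0 _] /andP[eps_gt0 eps_lt1] _ V0_bound _ V0_near.
have P_sign k : basicP R N L k = -1 \/ basicP R N L k = 1.
  by rewrite ffunE; case: ifP; [left|right].
have pol := polarized_of_rho P_sign V0_bound V0_near.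
have [n0 n0_large] := natr_mul_ge1 (mulr_gt0 h_gt0 eps_gt0).
exists n0 => n /n0_large n_large.
exact: (iter_Phi_eq_sign (ltW h_gt0) eps_gt0 (ltW eps_lt1) P_sign pol n_large).
Qed.
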